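(* Let $p$ be a prime, $q=p^r$ with $r\in\mathbb{Z}^+$, and let $d\neq p$ be a prime such that $q\not\equiv 1\pmod{d}$. Then for all integers $a$ with $1\le a\le q-2$ and all integers $i$ with $0\le i\le r-1$, $$d\left\lfloor\frac{ap^i}{q-1}\right\rfloor+\left\lfloor\frac{-dap^i}{q-1}\right\rfloor=(d-1)\left\lfloor\frac{ap^i}{q-1}\right\rfloor+\sum_{h=1}^{d-1}\left\lfloor\left\langle\frac{hp^i}{d}\right\rangle-\frac{ap^i}{q-1}\right\rfloor-1.$$
   Context: For $x\in\mathbb{Q}$, $\lfloor x\rfloor$ denotes the greatest integer less than or equal to $x$, and $\langle x\rangle=x-\lfloor x\rfloor$ denotes its fractional part. *)

From mathcomp Require Import all_boot all_order all_algebra.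
Import Order.TTheory GRing.Theory Num.Theory.
Local Open Scope ring_scope.

Definition qfloor (x : rat) : int := Num.floor x.
Definition qfrac (x : rat) : rat := x - (qfloor x)%:~R.

From mathcomp Require Import all_boot all_order all_algebra.
From mathcomp Require Import ring lra zify.
Import Order.TTheory GRing.Theory Num.Theory.
Local Open Scope ring_scope.

(* Write x = a p^i / (q - 1). By Hermite's identity,
   floor (- d x) = sum_(0 <= k < d) floor (- x + k / d).  Since p^i is coprime to
   the prime d, the fractional part of h p^i / d is (h p^i mod d) / d and
   h |-> h p^i mod d permutes {1, ..., d - 1}, so the sum on the right of the
   statement is sum_(1 <= k < d) floor (- x + k / d).  The identity thus reduces
   to floor x + floor (- x) = -1, i.e. to x not being an integer, which holds
   because q - 1 is coprime to p and 0 < a < q - 1. *)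

Lemma floorN_notint (F : archiRealFieldType) (x : F) : x \isn't a Num.int ->
  Num.floor (- x) = - Num.floor x - 1.
Proof. by move=> x_notint; rewrite -[LHS]opprK -ceilNfloor ceil_floor x_notint opprD. Qed.

Lemma qfloor_divn (m d : nat) : (0 < d)%N ->
  qfloor (m%:R / d%:R) = (m %/ d)%N%:Z.
Proof.
move=> d_gt0; apply: floor_def.
have d_gt0' : (0 : rat) < d%:R by rewrite ltr0n.
rewrite ler_pdivlMr // ltr_pdivrMr // rmorphD /= rmorph1 -!pmulrn.
by rewrite -natrM -[1]/(1%:R) -natrD -natrM ler_nat ltr_nat addn1 leq_divM ltn_ceil.
Qed.

Lemma qfrac_divn (m d : nat) : (0 < d)%N ->
  qfrac (m%:R / d%:R) = (m %% d)%N%:R / d%:R.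
Proof.
move=> d_gt0; rewrite /qfrac qfloor_divn // -pmulrn {1}(divn_eq m d).
by rewrite natrD natrM; field; rewrite pnatr_eq0 -lt0n.
Qed.

Lemma sum_leq_addn (R d : nat) : (R <= d)%N ->
  (\sum_(k < d) (d <= R + k)%N : nat)%N = R.
Proof.
move=> leRd; rewrite -(big_mkord xpredT (fun k => (d <= R + k)%N : nat)).
rewrite (big_cat_nat _ (n := d - R)) //= ?leq_subr //.
rewrite big_nat_cond big1 ?add0n; last first.
  by move=> k /andP[/andP[_ ltk] _]; apply/eqP; rewrite eqb0 -ltnNge; lia.
rewrite big_nat_cond (eq_bigr (fun _ => 1%N)) -?big_nat_cond.
  by rewrite sum_nat_const_nat; lia.
by move=> k /andP[/andP[lek _] _]; rewrite (_ : (d <= R + k)%N = true) //; lia.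
Qed.

Lemma floorD_natr_div (F : archiRealFieldType) (d R k : nat) (Q : int) (y : F) :
  (R < d)%N -> (k < d)%N -> Num.floor (d%:R * y) = Q * d%:Z + R%:Z ->
  Num.floor (y + k%:R / d%:R) = Q + (d <= R + k)%N%:Z.
Proof.
move=> ltRd ltkd floor_dy; apply: floor_def.
have d_gt0 : (0 : F) < d%:R by rewrite ltr0n; lia.
have := floor_itv (d%:R * y); rewrite floor_dy.
rewrite !rmorphD /= !rmorphM /= -!pmulrn rmorph1 => /andP[lo hi].
have -> : y + k%:R / d%:R = (d%:R * y + k%:R) / d%:R.
  by field; rewrite lt0r_neq0.
rewrite ler_pdivlMr // ltr_pdivrMr //.
have R_ge0 : (0 : F) <= R%:R by rewrite ler0n.
have k_ge0 : (0 : F) <= k%:R by rewrite ler0n.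
case: leqP => carry; rewrite ?rmorphD /= -?pmulrn ?rmorph0 ?rmorph1.
- have lo' : (d%:R : F) <= R%:R + k%:R by rewrite -natrD ler_nat.
  have hi' : R%:R + k%:R + 1 <= 2 * (d%:R : F).
    by rewrite -natrD -(natrM _ 2) -[1]/(1%:R) -natrD ler_nat; lia.
  by apply/andP; split; nra.
- have hi' : R%:R + k%:R + 1 <= (d%:R : F).
    by rewrite -natrD -[1]/(1%:R) -natrD ler_nat; lia.
  by apply/andP; split; nra.
Qed.

(* Hermite's identity: writing floor (d y) = Q d + R with 0 <= R < d, the term
   floor (y + k / d) is Q + 1 for exactly the R values of k with d <= R + k. *)
Lemma hermite_floor (F : archiRealFieldType) (d : nat) (y : F) : (0 < d)%N ->
  Num.floor (d%:R * y) = \sum_(k < d) Num.floor (y + k%:R / d%:R).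
Proof.
move=> d_gt0; set n := Num.floor (d%:R * y).
have [R R_def] : exists R : nat, (n %% d%:Z)%Z = R%:Z.
  by exists `|(n %% d%:Z)%Z|%N; rewrite gez0_abs // modz_ge0 // lt0n_neq0.
have ltRd : (R < d)%N by rewrite -ltz_nat -R_def ltz_pmod.
have n_def : n = (n %/ d%:Z)%Z * d%:Z + R%:Z by rewrite -R_def -divz_eq.
rewrite (eq_bigr _ (fun k _ => floorD_natr_div _ _ _ _ _ _ ltRd (ltn_ord k) n_def)).
rewrite big_split /= sumr_const card_ord -(big_morph Posz PoszD (erefl 0%:Z)).
by rewrite sum_leq_addn ?(ltnW ltRd) // [LHS]n_def pmulrn mulrzz.
Qed.

Lemma modn_mull_inj (c d : nat) : coprime c d ->
  {in gtn d &, injective (fun h => (h * c) %% d)%N}.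
Proof.
move=> cop u v ltud ltvd; wlog leuv : u v ltud ltvd / (u <= v)%N => [wlog_uv|].
  by case: (leqP u v) => [|/ltnW] leuv eq_mod; [|apply/esym]; apply: wlog_uv.
move=> /eqP; rewrite eq_sym eqn_mod_dvd ?leq_mul2r ?leuv ?orbT // -mulnBl.
rewrite Gauss_dvdl 1?coprime_sym // /dvdn modn_small; last by move: ltvd; rewrite inE; lia.
by move/eqP; lia.
Qed.

Lemma big_mulmod_perm (d c : nat) (G : nat -> int) : (0 < d)%N -> coprime c d ->
  \sum_(1 <= h < d) G ((h * c) %% d)%N = \sum_(1 <= k < d) G k.
Proof.
move=> d_gt0 cop; apply: (addrI (G 0%N)).
rewrite -{1}(mod0n d) -{1}(mul0n c) -!big_ltn // !big_mkord.
pose f (h : 'I_d) : 'I_d := Ordinal (ltn_pmod (h * c) d_gt0).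
have f_inj : injective f.
  move=> u v /(congr1 val) /(modn_mull_inj _ _ cop u v (ltn_ord u) (ltn_ord v)).
  exact: val_inj.
by rewrite [RHS](reindex_inj f_inj).
Qed.

Lemma dvdn_mul_coprime_lt (m a b : nat) : coprime m b -> (0 < a < m)%N ->
  ~~ (m %| a * b)%N.
Proof.
move=> cop /andP[a_gt0 ltam]; rewrite Gauss_dvdl //.
by apply/negP => /(dvdn_leq a_gt0); rewrite leqNgt ltam.
Qed.

Lemma intr_div_notint (F : archiNumFieldType) (m n : int) :
  n != 0 -> ~~ (n %| m)%Z -> (m%:~R / n%:~R : F) \isn't a Num.int.
Proof.
move=> n_neq0 ndvd; apply/intrP => -[k mn_k]; move: ndvd; apply/negP/negPn.
have -> : m = k * n.
  apply: (intr_inj (R := F)); rewrite rmorphM /= -mn_k.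
  by field; rewrite intr_eq0.
exact: dvdz_mull.
Qed.

Theorem lemma3p2 (p r d : nat) (a : int) (i : nat) :
  prime p -> (0 < r)%N -> prime d -> d != p ->
  (p ^ r != 1 %[mod d])%N ->
  1 <= a <= (p ^ r)%N%:Z - 2 ->
  (i <= r - 1)%N ->
  let q : int := (p ^ r)%N%:Z in
  let x : rat := (a * (p ^ i)%N%:Z)%:~R / (q - 1)%:~R in
  d%:Z * qfloor x + qfloor (- (d%:R) * x)
  = (d%:Z - 1) * qfloor x
    + \sum_(1 <= h < d) qfloor (qfrac ((h * p ^ i)%N%:R / d%:R) - x) - 1.
Proof.
move=> p_prime r_gt0 d_prime neq_dp _.
case: a => [n /andP[n_ge1 n_le] _ q x | n /andP[] //].
have d_gt0 : (0 < d)%N := prime_gt0 d_prime.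
have p_gt0 : (0 < p)%N := prime_gt0 p_prime.
have x_notint : x \isn't a Num.int.
  rewrite /x /q subzn ?expn_gt0 ?p_gt0 //.
  apply: intr_div_notint; first by rewrite -lt0n; lia.
  rewrite -PoszM dvdzE !absz_nat dvdn_mul_coprime_lt //; [|lia].
  rewrite coprimeXr // -(coprime_pexpr _ _ r_gt0) subn1.
  by rewrite coprimePn // expn_gt0 p_gt0.
have floor_dx : qfloor (- (d%:R) * x)
    = Num.floor (- x) + \sum_(1 <= k < d) Num.floor (- x + k%:R / d%:R).
  rewrite /qfloor mulNr -mulrN hermite_floor //.
  rewrite -(big_mkord xpredT (fun k => Num.floor (- x + k%:R / d%:R))).
  by rewrite big_ltn // mul0r addr0.
have sum_frac : \sum_(1 <= h < d) qfloor (qfrac ((h * p ^ i)%N%:R / d%:R) - x)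
    = \sum_(1 <= k < d) Num.floor (- x + k%:R / d%:R).
  under eq_bigr do rewrite qfrac_divn //.
  have cop : coprime (p ^ i) d.
    by rewrite coprimeXl // prime_coprime // dvdn_prime2 // eq_sym.
  rewrite (big_mulmod_perm d (p ^ i) (fun k => qfloor (k%:R / d%:R - x)) d_gt0 cop).
  by apply: eq_bigr => k _; rewrite addrC.
by rewrite floor_dx sum_frac floorN_notint // /qfloor; ring.
Qed.
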